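(* Let $(a_{n,i})_{n\ge1,1\le i\le n}$ be a deterministic array with $\sum_{i=1}^n|a_{n,i}|^2\le\frac{4}{n}$ for all $n$, and let $\gamma>0$. Let $V_1,V_2,\ldots$ be independent random variables with $V_i\sim\mathbb{P}_{V_i}$. Then $$\lim_{n\to\infty}\ \sup_{\mathbb{P}_{V_1},\ldots,\mathbb{P}_{V_n}\in\mathcal{D}_{1+\gamma}}\mathbb{E}\Bigl[\Bigl|\sum_{i=1}^n a_{n,i}\bigl(V_i-\mathbb{E}[V_i]\bigr)\Bigr|\Bigr]=0.$$
   Context: For $s>0$, $\mathcal{D}_s$ is the class of distributions of $\xi$ with $\mathbb{E}[\xi]=0$ and $1\le\mathbb{E}[|\xi|^s]\le2$. *)

From HB Require Import structures.
From mathcomp Require Import all_boot all_order all_algebra.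
From mathcomp Require Import all_classical all_reals all_analysis.
Set Implicit Arguments. Unset Strict Implicit. Unset Printing Implicit Defensive.
Import Order.TTheory GRing.Theory Num.Theory.
Local Open Scope classical_set_scope.
Local Open Scope ring_scope.

Definition in_Ds (R : realType) (s : R) (mu : probability R R) : Prop :=
  mu.-integrable [set: R] (fun x => x%:E) /\
  (\int[mu]_x x%:E = 0)%E /\
  (1%:E <= \int[mu]_x (`|x| `^ s)%:E <= 2%:E)%E.

Definition mutually_independent d (T : measurableType d) (R : realType)
  (P : probability T R) (n : nat) (V : 'I_n -> {RV P >-> R}) : Prop :=
  forall B : 'I_n -> set R, (forall i, measurable (B i)) ->
    P (\bigcap_(i in [set: 'I_n]) (V i @^-1` B i)) =
    (\prod_(i < n) P (V i @^-1` B i))%E.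

(* Truncate at M = dl * K and round down to the grid dl * Z: the quantizer
   q x = dl * floor (clip M x / dl) takes finitely many values, so the product
   rule defining independence gives E[f (V i) * g (V j)] = E[f (V i)] E[g (V j)]
   for the centred quantized variables with no approximation argument.  Their
   weighted sum W thus has E[W^2] <= (sum_i a_i^2) (M + beta)^2 = O(1/n), and
   |W| <= W^2 / (2c) + c / 2 turns this into a first-moment bound.  The
   quantization error obeys |x - q x| <= dl + |x|^(1+g) / M^g, whose mean is at
   most beta = dl + 2 / M^g uniformly over D_(1+g); it costs at most
   2 beta (sum_i |a_i|) <= 4 beta, small once dl is small and M is large. *)

From HB Require Import structures.
From mathcomp Require Import all_boot all_order all_algebra.
From mathcomp Require Import all_classical all_reals all_analysis.
From mathcomp Require Import measurable_realfun.
From mathcomp Require Import zify ring lra.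
Set Implicit Arguments. Unset Strict Implicit. Unset Printing Implicit Defensive.
Import Order.TTheory GRing.Theory Num.Theory.
Local Open Scope classical_set_scope.
Local Open Scope ring_scope.

Section probability_integral.
Context d (T : measurableType d) (R : realType) (P : probability T R).

Lemma integral_cst_probability (c : R) : (\int[P]_w c%:E = c%:E)%E.
Proof.
rewrite integral_cst //; set u := (X in (_ * X)%E).
have -> : u = 1%E by exact: probability_setT.
by rewrite mule1.
Qed.

Lemma bounded_integrable (f : T -> R) (B : R) :
  measurable_fun setT f -> (forall w, `|f w| <= B) -> P.-integrable setT (EFin \o f).
Proof.
move=> mf fB.
apply: (le_integrable _ _ _ (finite_measure_integrable_cst P B measurableT)) => //.
  exact/measurable_EFinP.
by move=> w _ /=; rewrite lee_fin (le_trans (fB w)) ?ler_norm.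
Qed.

Lemma ge0_integralD_le (f g : T -> R) (b1 b2 : R) :
  measurable_fun setT f -> measurable_fun setT g ->
  (forall w, 0 <= f w) -> (forall w, 0 <= g w) ->
  (\int[P]_w (f w)%:E <= b1%:E)%E -> (\int[P]_w (g w)%:E <= b2%:E)%E ->
  (\int[P]_w (f w + g w)%:E <= (b1 + b2)%:E)%E.
Proof.
move=> mf mg f0 g0 fb gb; under eq_integral do rewrite EFinD.
rewrite ge0_integralD ?EFinD ?leeD //; do ?[exact/measurable_EFinP];
  by move=> w _; rewrite lee_fin.
Qed.

End probability_integral.

Lemma sum_indic_fiber (T : Type) (R : realType) (f : T -> R) (s : seq R) (x : T) :
  uniq s -> f x \in s -> f x = \sum_(v <- s) v * \1_(f @^-1` [set v]) x.
Proof.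
move=> us fxs; rewrite (bigD1_seq (f x)) //= big1 ?addr0.
  by rewrite indicE mem_set ?mulr1.
by move=> v vfx; rewrite indicE memNset ?mulr0 //= => fxv; rewrite fxv eqxx in vfx.
Qed.

Section independence.
Context d (T : measurableType d) (R : realType) (P : probability T R).

Lemma integral_sum_indic (I : Type) (r : seq I) (F : I -> set T) (c : I -> R) :
  (forall k, measurable (F k)) ->
  (\int[P]_w (\sum_(k <- r) c k * \1_(F k) w)%:E =
   (\sum_(k <- r) c k * fine (P (F k)))%:E)%E.
Proof.
move=> mF; under eq_integral do rewrite -sumEFin.
rewrite integral_sum //; last first.
  move=> k; under eq_fun do rewrite EFinM.
  by apply: integrableZl => //; exact: integrable_indic.
rewrite -sumEFin; apply: eq_bigr => k _.
under eq_integral do rewrite EFinM.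
rewrite integralZl //; last exact: integrable_indic.
by rewrite integral_indic // setIT EFinM fineK // fin_num_measure.
Qed.

Lemma mutually_independent_pair (n : nat) (V : 'I_n -> {RV P >-> R}) (i j : 'I_n)
    (A B : set R) :
  mutually_independent V -> i != j -> measurable A -> measurable B ->
  P (V i @^-1` A `&` V j @^-1` B) = (P (V i @^-1` A) * P (V j @^-1` B))%E.
Proof.
move=> ind ij mA mB.
pose C k := if k == i then A else if k == j then B else setT.
have mC k : measurable (C k) by rewrite /C; case: ifP => _ //; case: ifP.
have := ind C mC.
have -> : \bigcap_(k in [set: 'I_n]) (V k @^-1` C k) = V i @^-1` A `&` V j @^-1` B.
  apply/seteqP; split => w /=.
    move=> VC; split; first by have := VC i I; rewrite /C eqxx.
    by have := VC j I; rewrite /C eqxx eq_sym (negbTE ij).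
  move=> [VA VB] k _; rewrite /C.
  by case: ifP => [/eqP -> //|_]; case: ifP => [/eqP -> //|_].
move=> ->; rewrite (bigD1 i) //= (bigD1 j) 1?eq_sym //= big1 ?mule1.
  by rewrite /C eqxx eq_sym (negbTE ij) eqxx.
move=> k /andP[ki kj]; rewrite /C (negbTE ki) (negbTE kj) preimage_setT.
exact: probability_setT.
Qed.

Lemma independent_simple_integralM (n : nat) (V : 'I_n -> {RV P >-> R}) (i j : 'I_n)
    (f g : R -> R) (s t : seq R) :
  mutually_independent V -> i != j ->
  measurable_fun setT f -> measurable_fun setT g ->
  (forall x, f x \in s) -> (forall x, g x \in t) ->
  (\int[P]_w (f (V i w) * g (V j w))%:E =
   \int[P]_w (f (V i w))%:E * \int[P]_w (g (V j w))%:E)%E.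
Proof.
move=> ind ij mf mg fs gt.
have mf1 v : measurable (f @^-1` [set v]) by rewrite -[_ @^-1` _]setTI; exact: mf.
have mg1 v : measurable (g @^-1` [set v]) by rewrite -[_ @^-1` _]setTI; exact: mg.
pose A v := V i @^-1` (f @^-1` [set v]).
pose B v := V j @^-1` (g @^-1` [set v]).
have mA v : measurable (A v) by exact: measurable_funPTI.
have mB v : measurable (B v) by exact: measurable_funPTI.
have fV w : f (V i w) = \sum_(v <- undup s) v * \1_(A v) w.
  change (f (V i w)) with ((f \o V i) w).
  by rewrite -sum_indic_fiber ?undup_uniq ?mem_undup.
have gV w : g (V j w) = \sum_(v <- undup t) v * \1_(B v) w.
  change (g (V j w)) with ((g \o V j) w).
  by rewrite -sum_indic_fiber ?undup_uniq ?mem_undup.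
pose AB (p : R * R) := A p.1 `&` B p.2.
have indicM (X Y : set T) w : \1_X w * \1_Y w = \1_(X `&` Y) w :> R.
  by rewrite indicI.
under eq_integral => w _.
  rewrite fV gV big_distrlr /=.
  under eq_bigr do under eq_bigr do rewrite mulrACA indicM.
  rewrite -(big_allpairs (F := fun p => p.1 * p.2 * \1_(AB p) w)).
  over.
rewrite integral_sum_indic; last by move=> p; exact: measurableI.
under eq_integral do rewrite fV.
rewrite integral_sum_indic //.
under eq_integral do rewrite gV.
rewrite integral_sum_indic // -EFinM big_distrlr /= big_allpairs; congr (_%:E).
apply: eq_bigr => v _; apply: eq_bigr => u _ /=.
rewrite /AB /= (mutually_independent_pair ind ij (mf1 v) (mg1 u)).
by rewrite fineM ?fin_num_measure //; [ring | exact: mA | exact: mB].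
Qed.

Lemma independent_simple_integral_sqr_sum_le (n : nat) (V : 'I_n -> {RV P >-> R})
    (f : 'I_n -> R -> R) (s : 'I_n -> seq R) (a : 'I_n -> R) (B : R) :
  mutually_independent V -> (forall i, measurable_fun setT (f i)) ->
  (forall i x, f i x \in s i) -> (forall i x, `|f i x| <= B) ->
  (forall i, \int[P]_w (f i (V i w))%:E = 0)%E ->
  (\int[P]_w ((\sum_(i < n) a i * f i (V i w)) ^+ 2)%:E <=
   ((\sum_(i < n) a i ^+ 2) * B ^+ 2)%:E)%E.
Proof.
move=> ind mf fs fB mean0.
pose Z (p : 'I_n * 'I_n) w := f p.1 (V p.1 w) * f p.2 (V p.2 w).
have mfV i : measurable_fun setT (fun w => f i (V i w)).
  exact: measurableT_comp (mf i) (@measurable_funP _ _ _ _ setT (V i)).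
have iZ p : P.-integrable setT (EFin \o Z p).
  apply: (@bounded_integrable _ _ _ P _ (B * B)); first exact: measurable_funM.
  by move=> w; rewrite normrM ler_pM.
have Z0 i j : i != j -> (\int[P]_w (Z (i, j) w)%:E = 0)%E.
  move=> ij; rewrite (independent_simple_integralM ind ij (mf i) (mf j) (fs i) (fs j)).
  by rewrite mean0 mul0e.
have ZB i : (\int[P]_w (Z (i, i) w)%:E <= (B ^+ 2)%:E)%E.
  apply: (@le_trans _ _ (\int[P]_w (B ^+ 2)%:E)%E).
    apply: le_integral => //; [exact: iZ | exact: finite_measure_integrable_cst |].
    move=> w _; rewrite lee_fin expr2 (le_trans (ler_norm _)) // normrM.
    by rewrite ler_pM.
  by rewrite integral_cst_probability.
under eq_integral => w _.
  rewrite expr2 big_distrlr /= pair_bigA /= -sumEFin.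
  under eq_bigr => p _ do rewrite mulrACA -/(Z p w) EFinM.
  over.
rewrite integral_sum //; last first.
  by move=> p; apply: integrableZl => //; exact: iZ.
under eq_bigr => p _ do rewrite integralZl ?iZ //.
rewrite -(pair_bigA _ (fun i j => (a i * a j)%:E * \int[P]_w (Z (i, j) w)%:E)%E) /=.
rewrite big_distrl /= -sumEFin; apply: lee_sum => i _.
rewrite (bigD1 i) //= big1 ?adde0 => [|j ji]; last by rewrite Z0 1?eq_sym ?mule0.
by rewrite -expr2 [leRHS]EFinM lee_wpmul2l ?lee_fin ?sqr_ge0.
Qed.

End independence.

Section clip.
Context {R : realType}.
Implicit Types M x y : R.

Definition clip M x : R := Num.max (- M) (Num.min x M).

Lemma clip_id M x : `|x| <= M -> clip M x = x.
Proof. by rewrite ler_norml => /andP[Mx xM]; rewrite /clip min_l // max_r. Qed.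

Lemma clip_nondecreasing M : nondecreasing_fun (clip M).
Proof. by move=> x y xy; rewrite /clip le_max2 // le_min2. Qed.

Lemma clip_itv M x : 0 <= M -> - M <= clip M x <= M.
Proof.
move=> M0; rewrite /clip le_max lexx /= ge_max ge_min lexx orbT andbT.
by rewrite lerNl (le_trans _ M0) // oppr_le0.
Qed.

Lemma norm_sub_clip_le M x : 0 <= M -> `|x - clip M x| <= `|x|.
Proof.
move=> M0; rewrite /clip; have [xM|Mx] := leP x M.
  have [Nx|xN] := leP (- M) x; first by rewrite subrr normr0.
  by rewrite !ler0_norm; lra.
by rewrite max_r ?ger0_norm; lra.
Qed.

Lemma norm_sub_clip_le_moment M g x : 0 < M -> 0 < g ->
  `|x - clip M x| <= `|x| `^ (1 + g) / M `^ g.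
Proof.
move=> M0 g0; have Mg0 : 0 < M `^ g by rewrite powR_gt0.
have [xM|Mx] := leP `|x| M.
  by rewrite clip_id // subrr normr0 divr_ge0 ?powR_ge0 ?ltW.
have x0 : 0 < `|x| by apply: lt_trans Mx.
apply: le_trans (norm_sub_clip_le x (ltW M0)) _.
rewrite ler_pdivlMr // powRD ?(gt_eqF x0) ?implybT // powRr1 // ler_pM2l //.
by rewrite ge0_ler_powR ?nnegrE ?ltW.
Qed.

End clip.

Section quantizer.
Context {R : realType} (dl : R) (K : nat).
Hypothesis dl_gt0 : 0 < dl.

Let M := dl * K%:R.

Definition quantize (x : R) : R := dl * (Num.floor (clip M x / dl))%:~R.

Definition quantize_values : seq R :=
  [seq dl * (i%:Z - K%:Z)%:~R | i <- iota 0 (K + K).+1].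

Lemma quantize_level_itv x : - (K%:Z) <= Num.floor (clip M x / dl) <= K%:Z.
Proof.
have /andP[Mc cM] := clip_itv x (mulr_ge0 (ltW dl_gt0) (ler0n _ K)).
rewrite -[X in X <= _ <= _](@intrKfloor R) -[X in _ <= _ <= X](@intrKfloor R).
by rewrite !le_floor // ?ler_pdivlMr ?ler_pdivrMr //; rewrite mulrC ?intrN ?mulrN.
Qed.

Lemma quantize_mem x : quantize x \in quantize_values.
Proof.
have /andP[lo hi] := quantize_level_itv x.
apply/mapP; exists (absz (Num.floor (clip M x / dl) + K%:Z)).
  rewrite mem_iota /=; lia.
congr (_ * _%:~R); lia.
Qed.

Lemma norm_quantize_le x : `|quantize x| <= M.
Proof.
have /andP[lo hi] := quantize_level_itv x.
rewrite /quantize normrM gtr0_norm // ler_pM2l // -intr_norm -[K%:R]/(K%:Z%:~R).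
by rewrite ler_int; lia.
Qed.

Lemma measurable_quantize : measurable_fun setT quantize.
Proof.
apply: nondecreasing_measurable => // x y xy.
rewrite /quantize ler_pM2l // ler_int le_floor // ler_pM2r ?invr_gt0 //.
exact: clip_nondecreasing.
Qed.

Lemma norm_sub_quantize_le x : `|x - quantize x| <= dl + `|x - clip M x|.
Proof.
have := floor_itv (clip M x / dl); set z := Num.floor _ => /andP[zl zu].
have cq : `|clip M x - quantize x| <= dl.
  rewrite /quantize -[X in `|X - _|](divfK (lt0r_neq0 dl_gt0)) mulrC -mulrBr.
  rewrite normrM gtr0_norm // ger0_norm ?subr_ge0 //.
  by rewrite -[X in _ <= X]mulr1 ler_pM2l // lerBlDl -intrD1 ltW.
by rewrite (le_trans (ler_distD (clip M x) _ _)) // addrC lerD.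
Qed.

End quantizer.

Lemma ler_norm_sqr_div (R : realFieldType) (x c : R) :
  0 < c -> `|x| <= x ^+ 2 / (2 * c) + c / 2.
Proof.
move=> c0; rewrite -(real_normK (num_real x)).
have -> : `|x| ^+ 2 / (2 * c) + c / 2 = `|x| + (`|x| - c) ^+ 2 / (2 * c).
  by field; rewrite gt_eqF.
by rewrite lerDl divr_ge0 ?sqr_ge0 // mulr_ge0 // ltW.
Qed.

Lemma norm_sum_le_split (R : realFieldType) (n : nat) (a x q m : 'I_n -> R) (c : R) :
  0 < c ->
  `|\sum_(i < n) a i * x i| <=
    (\sum_(i < n) a i * (q i - m i)) ^+ 2 / (2 * c) + c / 2 +
    \sum_(i < n) `|a i| * `|m i| + \sum_(i < n) `|a i| * `|x i - q i|.
Proof.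
move=> c0.
have -> : \sum_(i < n) a i * x i = \sum_(i < n) a i * (q i - m i) +
    \sum_(i < n) a i * m i + \sum_(i < n) a i * (x i - q i).
  by rewrite -!big_split; apply: eq_bigr => i _ /=; ring.
have sum_le (y : 'I_n -> R) : `|\sum_(i < n) a i * y i| <= \sum_(i < n) `|a i| * `|y i|.
  by rewrite (le_trans (ler_norm_sum _ _ _)) // ler_sum // => i _; rewrite normrM.
apply: le_trans (ler_normD _ _) _; rewrite lerD ?sum_le //.
by apply: le_trans (ler_normD _ _) _; rewrite lerD ?sum_le ?ler_norm_sqr_div.
Qed.

Lemma sum_norm_le_sum_sqr (R : realFieldType) (n : nat) (a : 'I_n -> R) (t : R) :
  0 < t -> \sum_(i < n) `|a i| <= t / 2 * \sum_(i < n) a i ^+ 2 + n%:R / (2 * t).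
Proof.
move=> t0; have -> : n%:R / (2 * t) = \sum_(i < n) (2 * t)^-1.
  by rewrite sumr_const card_ord mulr_natl.
rewrite mulr_sumr -big_split /=.
apply: ler_sum => i _.
have := @ler_norm_sqr_div _ (a i) t^-1; rewrite invr_gt0 => /(_ t0).
suff -> : a i ^+ 2 / (2 * t^-1) + t^-1 / 2 = t / 2 * a i ^+ 2 + (2 * t)^-1 by [].
by field; rewrite gt_eqF.
Qed.

Lemma exists_nat_powR_ge (R : realType) (x y g : R) : 0 < x -> 0 < g -> 0 <= y ->
  exists2 K : nat, (0 < K)%N & y <= (x * K%:R) `^ g.
Proof.
move=> x0 g0 y0; pose b := y `^ g^-1.
exists (Num.trunc (b / x)).+1 => //.
have -> : y = b `^ g by rewrite /b -powRrM mulVf ?gt_eqF // powRr1.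
have bK : b < x * (Num.trunc (b / x)).+1%:R.
  by rewrite mulrC -ltr_pdivrMr // truncnS_gt.
by rewrite ge0_ler_powR ?nnegrE ?powR_ge0 ?mulr_ge0 ?(ltW x0) ?(ltW g0) ?(ltW bK).
Qed.

Section moment_class.
Context d (T : measurableType d) (R : realType) (P : probability T R).
Variables (X : {RV P >-> R}) (s : R).
Hypothesis X_Ds : in_Ds s (distribution P X).

Lemma measurable_norm_powR : measurable_fun setT (fun w => `|X w| `^ s).
Proof.
have := measurableT_comp (measurable_powR s)
  (measurableT_comp (@normr_measurable R setT) (@measurable_funP _ _ _ _ setT X)).
by apply: eq_measurable_fun.
Qed.

Lemma in_Ds_integrable : P.-integrable setT (EFin \o X).
Proof.
have [iX _] := X_Ds; apply/integrableP; split.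
  by apply/measurable_EFinP; exact: measurable_funP.
have mabs : measurable_fun setT (fun y : R => `|y%:E|%E).
  by apply: measurableT_comp => //; exact/measurable_EFinP.
rewrite -(ge0_integral_distribution _ mabs) //.
by move/integrableP: iX => [].
Qed.

Lemma in_Ds_expectation : ('E_P[X] = 0)%E.
Proof.
have [_ [mean0 _]] := X_Ds.
by rewrite expectation_def -integral_distribution //; exact: in_Ds_integrable.
Qed.

Lemma in_Ds_moment_le : (\int[P]_w (`|X w| `^ s)%:E <= 2%:E)%E.
Proof.
have [_ [_ /andP[_ le2]]] := X_Ds.
have mpow : measurable_fun setT (fun y : R => (`|y| `^ s)%:E).
  apply/measurable_EFinP.
  by apply: measurableT_comp (measurable_powR s) (@normr_measurable R setT).
by rewrite -(ge0_integral_distribution _ mpow) // => y; rewrite lee_fin powR_ge0.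
Qed.

End moment_class.

Section quantized_moment_class.
Context d (T : measurableType d) (R : realType) (P : probability T R).
Variables (dl g : R) (K : nat).
Hypotheses (dl_gt0 : 0 < dl) (K_gt0 : (0 < K)%N) (g_gt0 : 0 < g).

Let M := dl * K%:R.
Let beta := dl + 2 / M `^ g.

Let M_gt0 : 0 < M. Proof. by rewrite mulr_gt0 ?ltr0n. Qed.
Let Mg_gt0 : 0 < M `^ g. Proof. by rewrite powR_gt0. Qed.

Variable X : {RV P >-> R}.
Hypothesis X_Ds : in_Ds (1 + g) (distribution P X).

Let mX : measurable_fun setT X. Proof. exact: measurable_funP. Qed.
Let mqX : measurable_fun setT (fun w => quantize dl K (X w)).
Proof. exact: measurableT_comp (measurable_quantize _ dl_gt0) mX. Qed.

Lemma in_Ds_quantize_error :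
  (\int[P]_w `|X w - quantize dl K (X w)|%:E <= beta%:E)%E.
Proof.
have mpow := measurable_norm_powR X (1 + g).
apply: (@le_trans _ _ (\int[P]_w (dl + `|X w| `^ (1 + g) / M `^ g)%:E)%E).
  apply: ge0_le_integral => //.
  - apply/measurable_EFinP; apply: measurableT_comp => //.
    exact: measurable_funB.
  - by apply/measurable_EFinP; apply: measurable_funD => //; exact: measurable_funM.
  move=> w _; rewrite lee_fin (le_trans (norm_sub_quantize_le K dl_gt0 _)) //.
  by rewrite lerD2l norm_sub_clip_le_moment.
under eq_integral do rewrite EFinD EFinM.
rewrite ge0_integralD //; last 3 first.
- by move=> w _; rewrite lee_fin ltW.
- by move=> w _; rewrite -EFinM lee_fin divr_ge0 ?powR_ge0 ?ltW.
- by apply: emeasurable_funM => //; exact/measurable_EFinP.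
rewrite integral_cst_probability ge0_integralZr //; last 2 first.
- exact/measurable_EFinP.
- by rewrite lee_fin invr_ge0 ltW.
rewrite /beta EFinD leeD2l // EFinM lee_wpmul2r ?in_Ds_moment_le //.
by rewrite lee_fin invr_ge0 ltW.
Qed.

Lemma in_Ds_quantize_mean_le :
  `|fine (\int[P]_w (quantize dl K (X w))%:E)| <= beta.
Proof.
have iqX : P.-integrable setT (EFin \o (fun w => quantize dl K (X w))).
  by apply: (bounded_integrable P mqX) => w; exact: norm_quantize_le.
have iX := in_Ds_integrable X_Ds.
have mean0 : (\int[P]_w (X w)%:E = 0)%E.
  by rewrite -expectation_def (in_Ds_expectation X_Ds).
rewrite -lee_fin -abse_EFin fineK ?(integrable_fin_num _ iqX) //.
rewrite -[Y in `|Y|%E]sube0 -mean0 -integralB //.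
apply: le_trans (le_abse_integral _ _ _) _ => //.
  by apply/measurable_EFinP; exact: measurable_funB.
under eq_integral do rewrite -EFinB abse_EFin distrC.
exact: in_Ds_quantize_error.
Qed.

End quantized_moment_class.

Section quantized_sum.
Context d (T : measurableType d) (R : realType) (P : probability T R).
Variables (dl g : R) (K : nat).
Hypotheses (dl_gt0 : 0 < dl) (K_gt0 : (0 < K)%N) (g_gt0 : 0 < g).

Let M := dl * K%:R.
Let beta := dl + 2 / M `^ g.

Lemma independent_Ds_weighted_sum_le (n : nat) (V : 'I_n -> {RV P >-> R})
    (a : 'I_n -> R) (c : R) :
  0 < c -> mutually_independent V ->
  (forall i, in_Ds (1 + g) (distribution P (V i))) ->
  (\int[P]_w `|\sum_(i < n) a i * V i w|%:E <=
   ((\sum_(i < n) a i ^+ 2) * (M + beta) ^+ 2 / (2 * c) + c / 2 +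
    2 * beta * \sum_(i < n) `|a i|)%:E)%E.
Proof.
move=> c0 ind VDs.
pose q i w := quantize dl K (V i w).
pose m i := fine (\int[P]_w (q i w)%:E).
pose W w := \sum_(i < n) a i * (q i w - m i).
pose E w := \sum_(i < n) `|a i| * `|V i w - q i w|.
have beta0 : 0 <= beta by rewrite addr_ge0 ?divr_ge0 ?powR_ge0 ?ltW.
have mV i : measurable_fun setT (V i) by exact: measurable_funP.
have mq i : measurable_fun setT (q i).
  exact: measurableT_comp (measurable_quantize K dl_gt0) (mV i).
have iq i : P.-integrable setT (EFin \o q i).
  by apply: (bounded_integrable P (mq i)) => w; exact: norm_quantize_le.
have mW : measurable_fun setT W.
  by apply: measurable_sum => i; apply: measurable_funM => //; exact: measurable_funB.
have mE : measurable_fun setT E.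
  apply: measurable_sum => i; apply: measurable_funM => //.
  by apply: measurableT_comp => //; exact: measurable_funB.
have centered i : (\int[P]_w (q i w - m i)%:E = 0)%E.
  have qfin : (\int[P]_w (q i w)%:E)%E \is a fin_num by exact: integrable_fin_num (iq i).
  under eq_integral do rewrite EFinB.
  rewrite integralB //; [|exact: iq | exact: finite_measure_integrable_cst].
  by rewrite integral_cst_probability /m fineK // subee.
have W2 : (\int[P]_w (W w ^+ 2)%:E <= ((\sum_(i < n) a i ^+ 2) * (M + beta) ^+ 2)%:E)%E.
  apply: (independent_simple_integral_sqr_sum_le (f := fun i x => quantize dl K x - m i)
    (s := fun i => [seq v - m i | v <- quantize_values dl K])) => // [i|i x|i x].
  - by apply: measurable_funB => //; exact: measurable_quantize.
  - exact: (map_f (fun v => v - m i) (quantize_mem K dl_gt0 x)).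
  - rewrite (le_trans (ler_normB _ _)) // lerD ?norm_quantize_le //.
    exact: in_Ds_quantize_mean_le.
have Eb : (\int[P]_w (E w)%:E <= (beta * \sum_(i < n) `|a i|)%:E)%E.
  rewrite /E; under eq_integral do rewrite -sumEFin.
  rewrite ge0_integral_sum //; last first.
    move=> i; apply/measurable_EFinP; apply: measurable_funM => //.
    by apply: measurableT_comp => //; exact: measurable_funB.
  rewrite mulr_sumr -sumEFin; apply: lee_sum => i _.
  under eq_integral do rewrite EFinM.
  rewrite ge0_integralZl //; last first.
    by apply/measurable_EFinP; apply: measurableT_comp => //; exact: measurable_funB.
  rewrite [beta * _]mulrC EFinM lee_wpmul2l ?lee_fin //.
  exact: in_Ds_quantize_error.
apply: (@le_trans _ _ (\int[P]_w (W w ^+ 2 / (2 * c) +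
    ((c / 2 + beta * \sum_(i < n) `|a i|) + E w))%:E)%E).
  apply: ge0_le_integral => //.
  - apply/measurable_EFinP; apply: measurableT_comp => //.
    by apply: measurable_sum => i; exact: measurable_funM.
  - apply/measurable_EFinP; apply: measurable_funD; last exact: measurable_funD.
    by apply: measurable_funM => //; exact: measurable_funM.
  move=> w _; rewrite lee_fin !addrA.
  apply: le_trans (@norm_sum_le_split _ n a (fun i => V i w) (fun i => q i w) m c c0) _.
  rewrite lerD2r lerD2l mulr_sumr ler_sum // => i _.
  by rewrite [_ * `|a i|]mulrC ler_wpM2l // in_Ds_quantize_mean_le.
set S := \sum_(i < n) `|a i|.
have S0 : 0 <= S by rewrite sumr_ge0.
have E0 w : 0 <= E w by rewrite sumr_ge0 // => i _; rewrite mulr_ge0.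
have -> : (\sum_(i < n) a i ^+ 2) * (M + beta) ^+ 2 / (2 * c) + c / 2 + 2 * beta * S =
    (\sum_(i < n) a i ^+ 2) * (M + beta) ^+ 2 / (2 * c) + (c / 2 + beta * S + beta * S).
  by ring.
have K0 : 0 <= c / 2 + beta * S by have := mulr_ge0 beta0 S0; lra.
have c2 : 0 <= (2 * c)^-1 by rewrite invr_ge0 mulr_ge0 ?ltW.
apply: ge0_integralD_le => //.
- by apply: measurable_funM => //; exact: measurable_funM.
- exact: measurable_funD.
- by move=> w; rewrite mulr_ge0 ?sqr_ge0.
- by move=> w; rewrite addr_ge0.
- under eq_integral do rewrite EFinM.
  rewrite ge0_integralZr //; first by rewrite EFinM lee_wpmul2r ?lee_fin.
  + by apply/measurable_EFinP; exact: measurable_funM.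
  + by move=> w _; rewrite lee_fin sqr_ge0.
apply: ge0_integralD_le => //.
by rewrite integral_cst_probability.
Qed.

End quantized_sum.

Lemma sum_norm_le2 (R : realFieldType) (n : nat) (a : 'I_n -> R) :
  (0 < n)%N -> \sum_(i < n) a i ^+ 2 <= 4 / n%:R -> \sum_(i < n) `|a i| <= 2.
Proof.
move=> n_gt0 a_sqr; have n0 : 0 < n%:R :> R by rewrite ltr0n.
apply: le_trans (sum_norm_le_sum_sqr _ (divr_gt0 n0 (ltr0n _ 2))) _.
have -> : n%:R / (2 * (n%:R / 2)) = 1 :> R by field; rewrite gt_eqF.
have : n%:R / 2 * \sum_(i < n) a i ^+ 2 <= n%:R / 2 * (4 / n%:R).
  by rewrite ler_pM2l ?divr_gt0.
have -> : n%:R / 2 * (4 / n%:R) = 2 :> R by field; rewrite gt_eqF.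
lra.
Qed.

Lemma sum_sqr_mul_le (R : realFieldType) (n : nat) (a : 'I_n -> R) (Q c e : R) :
  0 < c -> 0 < e -> 0 <= Q -> 2 * Q / (c * e) < n%:R ->
  \sum_(i < n) a i ^+ 2 <= 4 / n%:R ->
  (\sum_(i < n) a i ^+ 2) * Q / (2 * c) <= e.
Proof.
move=> c0 e0 Q0 nQ a_sqr.
have ce0 : 0 < c * e by rewrite mulr_gt0.
have n0 : 0 < n%:R :> R.
  by apply: (le_lt_trans _ nQ); rewrite divr_ge0 // mulr_ge0 // ltW.
rewrite ler_pdivrMr ?mulr_gt0 //.
apply: le_trans (_ : 4 / n%:R * Q <= _); first by rewrite ler_wpM2r.
rewrite mulrAC ler_pdivrMr //; move: nQ; rewrite ltr_pdivrMr // => nQ.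
have -> : e * (2 * c) * n%:R = 2 * (n%:R * (c * e)) by ring.
lra.
Qed.

Lemma exists_quantization_scale (R : realType) (g b : R) : 0 < g -> 0 < b ->
  exists dl K, [/\ 0 < dl, (0 < K)%N & dl + 2 / (dl * K%:R) `^ g <= b].
Proof.
move=> g0 b0; have dl0 : 0 < b / 2 by rewrite divr_gt0.
have [K K0 bK] := @exists_nat_powR_ge _ (b / 2) (4 / b) g dl0 g0
  (divr_ge0 (ler0n _ 4) (ltW b0)).
exists (b / 2), K; split => //.
have Mg0 : 0 < (b / 2 * K%:R) `^ g by rewrite powR_gt0 // mulr_gt0 ?ltr0n.
suff : 2 / (b / 2 * K%:R) `^ g <= b / 2 by lra.
rewrite ler_pdivrMr //; move: bK; rewrite ler_pdivrMr // => bK; lra.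
Qed.

Theorem lemmaA22 (R : realType) (a : nat -> nat -> R) (gamma : R) :
  (forall n : nat, \sum_(i < n) a n i ^+ 2 <= 4 / n%:R) ->
  0 < gamma ->
  forall eps : R, 0 < eps -> exists N : nat, forall n : nat, (N <= n)%N ->
    forall (d : measure_display) (T : measurableType d) (P : probability T R)
           (V : 'I_n -> {RV P >-> R}),
      mutually_independent V ->
      (forall i, in_Ds (1 + gamma) (distribution P (V i))) ->
      (\int[P]_w `| \sum_(i < n) a n i * (V i w - fine 'E_P[V i]) |%:E
         <= eps%:E)%E.
Proof.
move=> a_sqr gamma_gt0 eps eps_gt0.
have [c_gt0 e8_gt0] : 0 < eps / 4 /\ 0 < eps / 8 by rewrite !divr_gt0.
have [dl [K [dl_gt0 K_gt0 beta_le]]] := exists_quantization_scale gamma_gt0 e8_gt0.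
set beta := dl + _ in beta_le; pose Q := (dl * K%:R + beta) ^+ 2.
exists (Num.trunc (2 * Q / (eps / 4 * (eps / 4)))).+1 => n nN d T P V ind V_Ds.
have nQ : 2 * Q / (eps / 4 * (eps / 4)) < n%:R.
  by rewrite (lt_le_trans (truncnS_gt _)) // ler_nat.
under eq_integral do under eq_bigr do rewrite (in_Ds_expectation (V_Ds _)) subr0.
apply: le_trans (independent_Ds_weighted_sum_le dl_gt0 K_gt0 gamma_gt0 _ c_gt0 ind V_Ds) _.
rewrite lee_fin -/beta -/Q.
set u := \sum_(i < n) a n i ^+ 2; set S := \sum_(i < n) `|a n i|.
have uQ : u * Q / (2 * (eps / 4)) <= eps / 4.
  exact: (sum_sqr_mul_le c_gt0 c_gt0 (sqr_ge0 _) nQ (a_sqr n)).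
have S_le2 : S <= 2 by exact: (sum_norm_le2 (leq_trans (ltn0Sn _) nN) (a_sqr n)).
have beta_ge0 : 0 <= beta by rewrite addr_ge0 ?divr_ge0 ?powR_ge0 ?ltW.
have : beta * S <= eps / 8 * 2 by rewrite ler_pM ?sumr_ge0.
by move: uQ; set X := u * Q / _; lra.
Qed.
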